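(* Let $N:=\lceil 4(1-\gamma)^{-1}\rceil$, let $\Delta_0:=(1-\gamma)^{-1}\max_{s\in\mathcal S}g^{\pi_0}(s)$, and let $\bar D_0>0$ satisfy $\max_{s}D^{\pi^*}_{\pi_0}(s)\le\bar D_0$. Let PMD be run from $\pi_0$ with step sizes $\eta_t=4^{\lfloor t/N\rfloor}\bar D_0/\Delta_0$. Then for all $t\ge0$, $$V^{\pi_t}(s)-V^{\pi^*}(s)\le 2^{-\lfloor t/N\rfloor}\Delta_0\quad\forall s\in\mathcal S.$$
   Context: An infinite-horizon discounted MDP: finite state space $\mathcal S$, finite action space $\mathcal A$, transition probabilities $\mathcal P(s'\mid s,a)$, cost $c$, discount $\gamma\in[0,1)$. A policy $\pi$ assigns $\pi(\cdot\mid s)\in\Delta_{|\mathcal A|}$ (probability simplex). Let $\omega$ be a differentiable convex distance-generating function on $\Delta_{|\mathcal A|}$ and $D^{\pi'}_{\pi}(s):=\omega(\pi'(\cdot\mid s))-\omega(\pi(\cdot\mid s))-\langle\nabla\omega(\pi(\cdot\mid s)),\pi'(\cdot\mid s)-\pi(\cdot\mid s)\rangle$. For each $s$, $p\mapsto h^p(s)$ is closed convex on $\Delta_{|\mathcal A|}$ and $\mu_h$-strongly convex ($\mu_h\ge0$) w.r.t. this Bregman distance: $h^{p}(s)-h^{p'}(s)-\langle (h')^{p'}(s,\cdot),p-p'\rangle\ge\mu_h[\omega(p)-\omega(p')-\langle\nabla\omega(p'),p-p'\rangle]$. $V^\pi(s)=\mathbb E[\sum_{t\ge0}\gamma^t(c(s_t,a_t)+h^{\pi(\cdot\mid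 s_t)}(s_t))\mid s_0=s,\ a_t\sim\pi(\cdot\mid s_t),\ s_{t+1}\sim\mathcal P(\cdot\mid s_t,a_t)]$, $Q^\pi(s,a)$ the same with $a_0=a$. $\pi^*$ is an optimal policy ($V^{\pi^*}\le V^\pi$ pointwise for all $\pi$). Advantage: $\psi^\pi(s,p):=\langle Q^\pi(s,\cdot),p\rangle-V^\pi(s)+h^p(s)-h^{\pi(\cdot\mid s)}(s)$; advantage gap $g^\pi(s):=\max_{p\in\Delta_{|\mathcal A|}}\{-\psi^\pi(s,p)\}$. PMD: $\pi_{t+1}(\cdot\mid s)=\operatorname{argmin}_{p\in\Delta_{|\mathcal A|}}\{\eta_t[\langle Q^{\pi_t}(s,\cdot),p\rangle+h^p(s)]+\omega(p)-\omega(\pi_t(\cdot\mid s))-\langle\nabla\omega(\pi_t(\cdot\mid s)),p-\pi_t(\cdot\mid s)\rangle\}$ for all $s$. *)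

(* R : realType, actions = 'I_n, action distributions = 'rV[R]_n *)
From HB Require Import structures.
From mathcomp Require Import all_boot all_order all_algebra.
From mathcomp Require Import all_classical all_reals all_analysis.
Set Implicit Arguments. Unset Strict Implicit. Unset Printing Implicit Defensive.
Import Order.TTheory GRing.Theory Num.Theory.
Import numFieldNormedType.Exports.
Local Open Scope ring_scope.
Local Open Scope classical_set_scope.

Section MDP.
Variable R : realType.
Variables (S : finType) (n : nat).
Local Notation vec := 'rV[R]_n.

Definition dot (u v : vec) : R := \sum_(i < n) u 0 i * v 0 i.

Definition simplex : set vec :=
  [set p | (forall i, 0 <= p 0 i) /\ \sum_(i < n) p 0 i = 1].

Definition is_policy (pi : S -> vec) : Prop := forall s, simplex (pi s).

Definition grad (f : vec -> R) (p : vec) : vec := \row_i ('d f p (delta_mx 0 i)).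

(* Bregman distance omega(q) - omega(p) - <grad omega(p), q - p>;
   D^{pi'}_{pi}(s) = bregman omega (pi' s) (pi s) *)
Definition bregman (omega : vec -> R) (q p : vec) : R :=
  omega q - omega p - dot (grad omega p) (q - p).

Definition convex_on_simplex (f : vec -> R) : Prop :=
  forall p q t, simplex p -> simplex q -> 0 <= t <= 1 ->
    f (t *: p + (1 - t) *: q) <= t * f p + (1 - t) * f q.

(* closed = lower semicontinuous relative to the (closed) simplex *)
Definition lsc_on_simplex (f : vec -> R) : Prop :=
  forall p, simplex p -> forall e : R, 0 < e ->
    \forall q \near p, simplex q -> f p - e < f q.

Definition is_subgrad (f : vec -> R) (p g : vec) : Prop :=
  forall q, simplex q -> f p + dot g (q - p) <= f q.

(* MDP data: P s a s' = P(s'|s,a), c s a, h s p = h^p(s) *)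
Variables (P : S -> 'I_n -> S -> R) (c : S -> 'I_n -> R)
          (h : S -> vec -> R) (gamma : R).

Definition Ppi (pi : S -> vec) (s s' : S) : R := \sum_(a < n) pi s 0 a * P s a s'.

Definition rpi (pi : S -> vec) (s : S) : R :=
  \sum_(a < n) pi s 0 a * c s a + h s (pi s).

Fixpoint sdist (pi : S -> vec) (d0 : S -> R) (t : nat) : S -> R :=
  match t with
  | 0 => d0
  | t'.+1 => fun s' => \sum_(s : S) sdist pi d0 t' s * Ppi pi s s'
  end.

Definition dirac (s : S) : S -> R := fun s' => (s' == s)%:R.

Definition Vterm (pi : S -> vec) (s : S) (t : nat) : R :=
  \sum_(s' : S) sdist pi (dirac s) t s' * rpi pi s'.

Definition V (pi : S -> vec) (s : S) : R :=
  limn (fun N => \sum_(0 <= t < N) gamma ^+ t * Vterm pi s t).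

Definition Qterm (pi : S -> vec) (s : S) (a : 'I_n) (t : nat) : R :=
  match t with
  | 0 => c s a + h s (pi s)
  | t'.+1 => \sum_(s' : S) sdist pi (P s a) t' s' * rpi pi s'
  end.

Definition Q (pi : S -> vec) (s : S) (a : 'I_n) : R :=
  limn (fun N => \sum_(0 <= t < N) gamma ^+ t * Qterm pi s a t).

Definition Qrow (pi : S -> vec) (s : S) : vec := \row_a Q pi s a.

Definition adv (pi : S -> vec) (s : S) (p : vec) : R :=
  dot (Qrow pi s) p - V pi s + h s p - h s (pi s).

Definition adv_gap (pi : S -> vec) (s : S) : R :=
  sup [set - adv pi s p | p in simplex].

Definition is_optimal (pistar : S -> vec) : Prop :=
  is_policy pistar /\
  forall pi, is_policy pi -> forall s, V pistar s <= V pi s.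

Definition pmd_obj (omega : vec -> R) (eta : R) (pi : S -> vec) (s : S) (p : vec) : R :=
  eta * (dot (Qrow pi s) p + h s p) + bregman omega p (pi s).

Definition is_PMD (omega : vec -> R) (eta : nat -> R) (pis : nat -> S -> vec) : Prop :=
  forall t s, simplex (pis t.+1 s) /\
    forall p, simplex p -> pmd_obj omega (eta t) (pis t) s (pis t.+1 s)
                           <= pmd_obj omega (eta t) (pis t) s p.

End MDP.

(* Write G_t := V^{pi_t} - V^{pi*}, D_t := D^{pi*}_{pi_t} and K := P^{pi*}.  The
   three-point inequality of the mirror step, taken at pi*(s) and combined with
   the identity -psi^{pi_t}(s, pi*(s)) = G_t(s) - gamma (K G_t)(s), gives
     eta_t (G_t - gamma K G_t) <= eta_t (G_t - G_{t+1}) + D_t - D_{t+1};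
   taken at pi_t(s) it shows that G_t is nonincreasing.  The same identity at
   t = 0 and the maximum principle for I - gamma K give G_0 <= Delta_0.
   Sum the inequality over the first (j+1)N steps: the D-terms telescope to at
   most Dbar_0, and if G <= Delta_0 / 2^i at the start of every earlier epoch i,
   epoch i contributes at most 4^i (Dbar_0 / Delta_0) (Delta_0 / 2^i) = 2^i Dbar_0.
   The maximum principle then bounds the eta-weighted sum of G by
   2^{j+1} Dbar_0 / (1 - gamma), while monotonicity bounds it below by
   N 4^j (Dbar_0 / Delta_0) G_{(j+1)N}; as (1 - gamma) N >= 4, this gives
   G_{(j+1)N} <= Delta_0 / 2^{j+1}. *)

From Pilot Require Import Defs.
From HB Require Import structures.
From mathcomp Require Import all_boot all_order all_algebra.
From mathcomp Require Import all_classical all_reals all_analysis.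
From mathcomp Require Import ring lra.
Set Implicit Arguments.
Unset Strict Implicit.
Unset Printing Implicit Defensive.
Import Order.TTheory GRing.Theory Num.Theory.
Import numFieldNormedType.Exports.
Local Open Scope ring_scope.
Local Open Scope classical_set_scope.

Section MaxPrinciple.
Variables (R : realType) (S : finType) (K : S -> S -> R) (g : R).
Hypotheses (K_ge0 : forall s s', 0 <= K s s') (K_sum1 : forall s, \sum_s' K s s' = 1).
Hypotheses (g_ge0 : 0 <= g) (g_lt1 : g < 1).

Lemma stochastic_avg_le (y : S -> R) (M : R) s :
  (forall s', y s' <= M) -> \sum_s' K s s' * y s' <= M.
Proof.
move=> y_le; apply: le_trans (_ : \sum_s' K s s' * M <= _).
  by apply: ler_sum => s' _; apply: ler_wpM2l.
by rewrite -mulr_suml K_sum1 mul1r.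
Qed.

Lemma discounted_max_principle (y : S -> R) (C : R) :
  (forall s, y s - g * \sum_s' K s s' * y s' <= C) -> forall s, y s <= C / (1 - g).
Proof.
move=> y_sub s.
have [smax _ y_le] := @arg_maxP _ R S s xpredT y isT.
have Ky_le : \sum_s' K smax s' * y s' <= y smax.
  by apply: stochastic_avg_le => s'; exact: y_le.
have gKy_le := ler_wpM2l g_ge0 Ky_le.
have ymax_le : y smax * (1 - g) <= C by have := y_sub smax; lra.
rewrite ler_pdivlMr ?subr_gt0 //; apply: le_trans ymax_le.
by apply: ler_wpM2r; [rewrite subr_ge0 ltW | exact: y_le].
Qed.

End MaxPrinciple.

Lemma telescope_sumr_down (M : zmodType) m n (f : nat -> M) : (m <= n)%N ->
  \sum_(m <= k < n) (f k - f k.+1) = f m - f n.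
Proof.
move=> mn; rewrite -opprB -(telescope_sumr f mn) -sumrN.
by apply: eq_bigr => k _; rewrite opprB.
Qed.

(* In the application [gap t s] is V^{pi_t}(s) - V^{pi*}(s), [breg t s] is
   D^{pi*}_{pi_t}(s) and [K] is the transition matrix of pi*. *)
Section RestartedStepsizes.
Variables (R : realType) (S : finType) (K : S -> S -> R) (g Delta0 Dbar0 : R) (N : nat).
Variables (gap breg : nat -> S -> R).
Hypotheses (K_ge0 : forall s s', 0 <= K s s') (K_sum1 : forall s, \sum_s' K s s' = 1).
Hypotheses (g_ge0 : 0 <= g) (g_lt1 : g < 1).
Hypotheses (Delta0_gt0 : 0 < Delta0) (Dbar0_gt0 : 0 < Dbar0).
Hypotheses (N_gt0 : (0 < N)%N) (N_large : 4 <= (1 - g) * N%:R).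
Hypotheses (gap_ge0 : forall t s, 0 <= gap t s) (breg_ge0 : forall t s, 0 <= breg t s).
Hypotheses (gap0_le : forall s, gap 0 s <= Delta0) (breg0_le : forall s, breg 0 s <= Dbar0).
Hypothesis gap_succ_le : forall t s, gap t.+1 s <= gap t s.

Let eta_epoch (j : nat) : R := 4 ^+ j * Dbar0 / Delta0.
Let eta (t : nat) : R := eta_epoch (t %/ N).

Hypothesis gap_step : forall t s,
  eta t * (gap t s - g * \sum_s' K s s' * gap t s') <=
  eta t * (gap t s - gap t.+1 s) + breg t s - breg t.+1 s.

Lemma gap_nonincreasing a b s : (a <= b)%N -> gap b s <= gap a s.
Proof.
move/subnK => <-; elim: (b - a)%N => [//|m IH].
by rewrite addSn; apply: le_trans (gap_succ_le _ _) IH.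
Qed.

Lemma eta_epoch_ge0 j : 0 <= eta_epoch j.
Proof. by rewrite divr_ge0 ?mulr_ge0 ?exprn_ge0 ?ltW. Qed.

Lemma eta_in_epoch j t : (j * N <= t < j.+1 * N)%N -> eta t = eta_epoch j.
Proof.
by case/andP=> jt tj; rewrite /eta; congr eta_epoch; apply/eqP;
  rewrite eqn_leq -ltnS ltn_divLR // tj leq_divRL.
Qed.

Lemma epoch_le_next j : (j * N <= j.+1 * N)%N.
Proof. by rewrite leq_mul2r leqnSn orbT. Qed.

Lemma four_expE j : (4 : R) ^+ j = 2 ^+ j * 2 ^+ j.
Proof. by rewrite -exprMn; congr (_ ^+ _); lra. Qed.

Lemma epoch_decrease_le j s : (forall s, gap (j * N) s <= Delta0 / 2 ^+ j) ->
  \sum_(j * N <= t < j.+1 * N) eta t * (gap t s - gap t.+1 s) <= Dbar0 * 2 ^+ j.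
Proof.
move=> gap_epoch.
have -> : \sum_(j * N <= t < j.+1 * N) eta t * (gap t s - gap t.+1 s)
    = eta_epoch j * (gap (j * N) s - gap (j.+1 * N) s).
  rewrite -(telescope_sumr_down (fun t => gap t s) (epoch_le_next j)) mulr_sumr.
  by apply: eq_big_nat => t /eta_in_epoch ->.
apply: le_trans (_ : eta_epoch j * (Delta0 / 2 ^+ j) <= _).
  apply: ler_wpM2l; first exact: eta_epoch_ge0.
  by have := gap_ge0 (j.+1 * N) s; have := gap_epoch s; lra.
suff -> : eta_epoch j * (Delta0 / 2 ^+ j) = Dbar0 * 2 ^+ j by [].
by rewrite /eta_epoch four_expE; field; rewrite expf_neq0 ?gt_eqF.
Qed.

Lemma weighted_decrease_le m s :
  (forall i, (i < m)%N -> forall s, gap (i * N) s <= Delta0 / 2 ^+ i) ->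
  \sum_(0 <= t < m * N) eta t * (gap t s - gap t.+1 s) <= Dbar0 * (2 ^+ m - 1).
Proof.
elim: m => [_|m IH gap_epochs]; first by rewrite mul0n big_geq // expr0 subrr mulr0.
rewrite (big_cat_nat (leq0n (m * N)) (epoch_le_next m)) /=.
have := IH (fun i lt_im => gap_epochs i (leqW lt_im)).
have := epoch_decrease_le s (gap_epochs m (ltnSn m)).
by rewrite exprS; lra.
Qed.

Lemma weighted_gap_le m s :
  (forall i, (i < m)%N -> forall s, gap (i * N) s <= Delta0 / 2 ^+ i) ->
  \sum_(0 <= t < m * N) eta t * gap t s <= Dbar0 * 2 ^+ m / (1 - g).
Proof.
move=> gap_epochs; set T := (m * N)%N.
move: s; apply: (discounted_max_principle K_ge0 K_sum1 g_ge0 g_lt1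
  (y := fun s => \sum_(0 <= t < T) eta t * gap t s)) => s.
have -> : \sum_(0 <= t < T) eta t * gap t s
          - g * \sum_s' K s s' * \sum_(0 <= t < T) eta t * gap t s'
        = \sum_(0 <= t < T) eta t * (gap t s - g * \sum_s' K s s' * gap t s').
  have -> : \sum_s' K s s' * \sum_(0 <= t < T) eta t * gap t s'
          = \sum_(0 <= t < T) eta t * \sum_s' K s s' * gap t s'.
    under eq_bigr do rewrite mulr_sumr.
    rewrite exchange_big /=; apply: eq_bigr => t _.
    by rewrite mulr_sumr; apply: eq_bigr => s' _; ring.
  by rewrite mulr_sumr -sumrB; apply: eq_bigr => t _; ring.
apply: le_trans (_ : \sum_(0 <= t < T) (eta t * (gap t s - gap t.+1 s)
                                       + (breg t s - breg t.+1 s)) <= _).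
  by apply: ler_sum => t _; rewrite addrA; exact: gap_step.
rewrite big_split /= telescope_sumr_down //.
have := weighted_decrease_le s gap_epochs; have := breg0_le s; have := breg_ge0 T s.
lra.
Qed.

Lemma weighted_gap_ge j s :
  N%:R * (eta_epoch j * gap (j.+1 * N) s) <= \sum_(0 <= t < j.+1 * N) eta t * gap t s.
Proof.
rewrite (big_cat_nat (leq0n (j * N)) (epoch_le_next j)) /= -[leLHS]add0r.
apply: lerD.
  by apply: sumr_ge0 => t _; apply: mulr_ge0; [exact: eta_epoch_ge0 | exact: gap_ge0].
rewrite mulr_natl -[X in _ *+ X](addnK (j * N) N) -mulSn -sumr_const_nat.
apply: ler_sum_nat => t /[dup] /eta_in_epoch -> /andP[_ lt_t].
by apply: ler_wpM2l; [exact: eta_epoch_ge0 | exact: gap_nonincreasing (ltnW lt_t)].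
Qed.

Lemma gap_epoch_le j s : gap (j * N) s <= Delta0 / 2 ^+ j.
Proof.
elim/ltn_ind: j s => -[_ s|j IH s]; first by rewrite mul0n expr0 divr1.
have sum_bounds := le_trans (weighted_gap_ge j s) (weighted_gap_le s IH).
set x := gap _ s in sum_bounds *.
have ex_ge0 : 0 <= eta_epoch j * x by apply: mulr_ge0; [exact: eta_epoch_ge0 | exact: gap_ge0].
have g1 : 0 < 1 - g by rewrite subr_gt0.
rewrite ler_pdivlMr // in sum_bounds.
have ex_le : 4 * (eta_epoch j * x) <= Dbar0 * 2 ^+ j.+1.
  by have := ler_wpM2r ex_ge0 N_large; lra.
have b_gt0 : 0 < 2 ^+ j :> R by rewrite exprn_gt0.
rewrite exprS ler_pdivlMr ?mulr_gt0 //.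
have -> : x * (2 * 2 ^+ j) = 4 * (eta_epoch j * x) * (Delta0 / (2 * 2 ^+ j * Dbar0)).
  by rewrite /eta_epoch four_expE; field; rewrite ?gt_eqF.
apply: le_trans (ler_wpM2r _ ex_le) _; first by rewrite divr_ge0 ?ltW ?mulr_gt0.
by rewrite exprS [leLHS](_ : _ = Delta0) //; field; rewrite ?gt_eqF.
Qed.

Lemma gap_le t s : gap t s <= Delta0 / 2 ^+ (t %/ N).
Proof. exact: le_trans (gap_nonincreasing s (leq_divM t N)) (gap_epoch_le _ s). Qed.

End RestartedStepsizes.

Section SimplexConvexity.
Variables (R : realType) (n : nat).
Local Notation vec := 'rV[R]_n.
Implicit Types (f phi omega : vec -> R) (p q x u v : vec).

Lemma dotDr u v w : dot u (v + w) = dot u v + dot u w.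
Proof. by rewrite /dot -big_split; apply: eq_bigr => i _; rewrite mxE mulrDr. Qed.

Lemma dotZr u v (a : R) : dot u (a *: v) = a * dot u v.
Proof. by rewrite /dot mulr_sumr; apply: eq_bigr => i _; rewrite mxE mulrCA. Qed.

Lemma dotBr u v w : dot u (v - w) = dot u v - dot u w.
Proof. by rewrite /dot -sumrB; apply: eq_bigr => i _; rewrite !mxE mulrBr. Qed.

Lemma dotNl u v : dot (- u) v = - dot u v.
Proof. by rewrite /dot -sumrN; apply: eq_bigr => i _; rewrite mxE mulNr. Qed.

Lemma dot_grad f p v : dot (grad f p) v = 'd f p v.
Proof.
rewrite /dot /grad {2}(row_sum_delta v) linear_sum; apply: eq_bigr => i _.
by rewrite mxE linearZ /= mulrC.
Qed.

Lemma simplex_le1 p i : simplex p -> p 0 i <= 1.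
Proof. by case=> p_ge0 <-; rewrite (bigD1 i) //= lerDl sumr_ge0. Qed.

Lemma dot_simplex_ge u p : simplex p -> - \sum_i `|u 0 i| <= dot u p.
Proof.
move=> sp; rewrite /dot -sumrN; apply: ler_sum => i _.
apply: le_trans (_ : - `|u 0 i| * p 0 i <= _).
  by rewrite mulNr lerN2 ler_piMr ?simplex_le1.
by apply: ler_wpM2r; [exact: sp.1 | exact: lerNnormlW].
Qed.

Lemma simplex_conv p q t : simplex p -> simplex q -> 0 <= t <= 1 ->
  simplex (t *: p + (1 - t) *: q).
Proof.
move=> [p_ge0 p_sum1] [q_ge0 q_sum1] /andP[t_ge0 t_le1]; split.
  by move=> i; rewrite !mxE addr_ge0 ?mulr_ge0 ?subr_ge0.
under eq_bigr do rewrite !mxE.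
by rewrite big_split /= -!mulr_sumr p_sum1 q_sum1 !mulr1 addrC subrK.
Qed.

Lemma convE p q (t : R) : t *: p + (1 - t) *: q = t *: (p - q) + q.
Proof. by apply/rowP => i; rewrite !mxE; ring. Qed.

Lemma convex_on_simplexZ (a : R) f : 0 <= a -> convex_on_simplex f ->
  convex_on_simplex (fun q => a * f q).
Proof.
move=> a_ge0 cvx p q t sp sq t01; have := ler_wpM2l a_ge0 (cvx p q t sp sq t01).
by rewrite mulrDr !(mulrCA a).
Qed.

Lemma convex_on_simplex_dotD u f : convex_on_simplex f ->
  convex_on_simplex (fun q => dot u q + f q).
Proof.
move=> cvx p q t sp sq t01; have := cvx p q t sp sq t01.
rewrite dotDr !dotZr; lra.
Qed.

Lemma diff_quotient_cvg f a v : differentiable f a ->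
  ((fun l : R => l^-1 * (f (l *: v + a) - f a)) @ 0^'+ --> 'd f a v)%classic.
Proof.
move=> fa; rewrite -deriveE //.
pose quot (l : R) := l^-1 *: ((f \o shift a) (l *: v) - f a).
have quot_cvg : (quot @ 0^' --> 'D_v f a)%classic := @diff_derivable _ _ _ f a v fa.
suff : (quot @ 0^'+ --> 'D_v f a)%classic by [].
apply: cvg_trans quot_cvg; apply: cvg_app; apply: within_subset.
by move=> l /= l_gt0; rewrite gt_eqF.
Qed.

Lemma diff_ge_quotient_lb f a v B : differentiable f a ->
  (forall l : R, 0 < l <= 1 -> B <= l^-1 * (f (l *: v + a) - f a)) -> B <= 'd f a v.
Proof.
move=> fa lb; apply: (@closed_cvg _ _ _ _ _ (fun y => B <= y) (@closed_ge _ B) _ _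
  (diff_quotient_cvg (v := v) fa)).
near=> l; apply: lb; apply/andP; split; near: l; first exact: nbhs_right_gt.
by apply: nbhs_right_le; exact: ltr01.
Unshelve. all: by end_near.
Qed.

Lemma diff_le_quotient_ub f a v B : differentiable f a ->
  (forall l : R, 0 < l <= 1 -> l^-1 * (f (l *: v + a) - f a) <= B) -> 'd f a v <= B.
Proof.
move=> fa ub; apply: (@closed_cvg _ _ _ _ _ (fun y => y <= B) (@closed_le _ B) _ _
  (diff_quotient_cvg (v := v) fa)).
near=> l; apply: ub; apply/andP; split; near: l; first exact: nbhs_right_gt.
by apply: nbhs_right_le; exact: ltr01.
Unshelve. all: by end_near.
Qed.

Lemma bregman_self omega p : bregman omega p p = 0.
Proof. by rewrite /bregman dotBr !subrr. Qed.

Lemma bregman_ge0 omega q p : differentiable omega p -> convex_on_simplex omega ->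
  simplex q -> simplex p -> 0 <= bregman omega q p.
Proof.
move=> dp cvx sq sp; rewrite /bregman dot_grad subr_ge0.
apply: diff_le_quotient_ub => // l /andP[l_gt0 l_le1].
have := cvx q p l sq sp; rewrite ltW //= l_le1 convE => /(_ isT) conv_le.
by rewrite ler_pdivrMl //; lra.
Qed.

Lemma convex_argmin_diff_ge phi omega (ps p : vec) :
  convex_on_simplex phi -> differentiable omega ps -> simplex ps -> simplex p ->
  (forall q, simplex q -> phi ps + omega ps <= phi q + omega q) ->
  phi ps - phi p <= 'd omega ps (p - ps).
Proof.
move=> cvx dps sps sp opt; apply: diff_ge_quotient_lb => // l /andP[l_gt0 l_le1].
have l01 : 0 <= l <= 1 by rewrite ltW.
have := opt _ (simplex_conv sp sps l01); have := cvx p ps l sp sps l01.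
rewrite convE ler_pdivlMl //; lra.
Qed.

Lemma bregman_three_point omega phi (x ps p : vec) :
  differentiable omega ps -> convex_on_simplex phi -> simplex ps -> simplex p ->
  (forall q, simplex q -> phi ps + bregman omega ps x <= phi q + bregman omega q x) ->
  phi ps + bregman omega ps x + bregman omega p ps <= phi p + bregman omega p x.
Proof.
move=> dps cvx sps sp opt.
have opt_lin q : simplex q -> dot (- grad omega x) ps + phi ps + omega ps
                              <= dot (- grad omega x) q + phi q + omega q.
  move=> sq; have := opt q sq; rewrite /bregman.
  have := dotNl (grad omega x) ps; have := dotNl (grad omega x) q.
  have := dotBr (grad omega x) ps x; have := dotBr (grad omega x) q x.
  lra.
have first_order : dot (- grad omega x) ps + phi ps - (dot (- grad omega x) p + phi p)
                   <= dot (grad omega ps) (p - ps).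
  rewrite dot_grad.
  exact: convex_argmin_diff_ge (convex_on_simplex_dotD _ cvx) dps sps sp opt_lin.
(* Abstracting the two gradients keeps lra from unfolding them to compare atoms. *)
rewrite /bregman; move: (grad omega x) (grad omega ps) first_order => gx gps first_order.
have := dotBr gps p ps; have := dotNl gx ps; have := dotNl gx p.
have := dotBr gx ps x; have := dotBr gx p x.
lra.
Qed.

Lemma simplex_delta (i : 'I_n) : simplex ('e_i : vec).
Proof.
split=> [j|]; first by rewrite mxE ler0n.
rewrite (bigD1 i) //= big1 ?addr0 => [|j /negbTE ji]; first by rewrite mxE !eqxx.
by rewrite mxE ji andbF.
Qed.

Lemma simplex_eq_delta p i : simplex p -> p 0 i = 1 -> p = 'e_i.
Proof.
move=> [p_ge0 p_sum1] pi1; apply/rowP => j; rewrite !mxE eqxx /=.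
have [->|ji] := eqVneq j i; first by rewrite pi1.
have rest0 : \sum_(k | k != i) p 0 k = 0.
  by move: p_sum1; rewrite (bigD1 i) //= pi1; lra.
by rewrite (psumr_eq0P (fun k _ => p_ge0 k) rest0).
Qed.

Lemma simplex_dim_gt0 p : simplex p -> (0 < n)%N.
Proof.
case=> _ p_sum1; rewrite lt0n; apply/eqP => n0; move: p_sum1.
rewrite big1 => [/esym/eqP|[m lt_mn] _]; first by rewrite oner_eq0.
by exfalso; rewrite n0 in lt_mn.
Qed.

Lemma simplex_split_vertex p i : simplex p -> p 0 i < 1 ->
  exists2 p', simplex p' & [/\ p' 0 i = 0, forall j, p 0 j = 0 -> p' 0 j = 0
                             & p = p 0 i *: 'e_i + (1 - p 0 i) *: p'].
Proof.
move=> sp pi_lt1; set a := p 0 i.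
have a1_gt0 : 0 < 1 - a by rewrite subr_gt0.
pose p' := (1 - a)^-1 *: (p - a *: 'e_i).
have p'E j : p' 0 j = (1 - a)^-1 * (p 0 j - a * (j == i)%:R) by rewrite !mxE eqxx.
exists p'; last split.
- split=> [j|].
    rewrite p'E; apply: mulr_ge0; first by rewrite invr_ge0 ltW.
    by case: eqP => [->|_]; rewrite ?mulr1 ?subrr // mulr0 subr0 sp.1.
  under eq_bigr do rewrite p'E.
  rewrite -mulr_sumr sumrB sp.2 -mulr_sumr (bigD1 i) //= eqxx mulr1n.
  rewrite big1 ?addr0 ?mulr1 ?mulVf ?gt_eqF // => j.
  by case: eqP => // _ _; rewrite mulr0.
- by rewrite p'E eqxx mulr1 subrr mulr0.
- move=> j pj0; rewrite p'E pj0; case: eqP => [ji|_]; last by rewrite mulr0 subr0 mulr0.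
  have a0 : a = 0 by rewrite /a -ji.
  by rewrite a0 mul0r subrr mulr0.
- by rewrite /p' scalerA mulfV ?gt_eqF // scale1r addrC subrK.
Qed.

Lemma convex_on_simplex_le_vertices f p : convex_on_simplex f -> simplex p ->
  f p <= \sum_i `|f 'e_i|.
Proof.
move=> cvx; set M := \sum_i _.
have fe_le i : f 'e_i <= M.
  by apply: le_trans (ler_norm _) _; rewrite /M (bigD1 i) //= lerDl sumr_ge0.
suff supp_le k : (k <= n)%N -> forall p, simplex p ->
    (forall i : 'I_n, (k <= i)%N -> p 0 i = 0) -> f p <= M.
  by move=> sp; apply: (supp_le n) => // i; rewrite leqNgt ltn_ord.
elim: k => [_ {}p [_ p_sum1] p0|k IH lt_kn {}p sp pk].
  by move: p_sum1; rewrite big1 // => /esym/eqP; rewrite oner_eq0.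
pose i := Ordinal lt_kn.
have [pi_lt1|pi_ge1] := ltP (p 0 i) 1; last first.
  have pi1 : p 0 i = 1 by apply/eqP; rewrite eq_le simplex_le1.
  by rewrite (simplex_eq_delta sp pi1).
have [p' sp' [p'i0 p'0 ->]] := simplex_split_vertex sp pi_lt1.
have p'_supp (j : 'I_n) : (k <= j)%N -> p' 0 j = 0.
  move=> kj; have [->|/eqP ji] := eqVneq j i; first exact: p'i0.
  apply/p'0/pk; rewrite ltn_neqAle kj andbT.
  by apply/eqP => kj'; apply: ji; apply: val_inj.
have pi01 : 0 <= p 0 i <= 1 by rewrite sp.1 ltW.
apply: le_trans (cvx _ _ _ (simplex_delta i) sp' pi01) _.
have := ler_wpM2l (sp.1 i) (fe_le i).
have := ler_wpM2l (_ : 0 <= 1 - p 0 i) (IH (ltnW lt_kn) p' sp' p'_supp).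
lra.
Qed.

Lemma convex_on_simplex_lbounded f : convex_on_simplex f ->
  exists L, forall p, simplex p -> L <= f p.
Proof.
move=> cvx; have [n0|n_gt0] := posnP n.
  by exists 0 => p /simplex_dim_gt0; rewrite n0.
set m : R := n%:R; have m_gt0 : 0 < m by rewrite ltr0n.
pose u : vec := const_mx m^-1; pose t : R := (m + 1)^-1.
have t_gt0 : 0 < t by rewrite invr_gt0; lra.
have t_le1 : t <= 1 by rewrite invf_le1; lra.
exists ((f u - (1 - t) * \sum_i `|f 'e_i|) / t) => p sp.
pose q : vec := m^-1 *: ((m + 1) *: u - p).
have sq : simplex q.
  split=> [i|].
    rewrite !mxE; apply: mulr_ge0; first by rewrite invr_ge0 ltW.
    rewrite subr_ge0; apply: le_trans (simplex_le1 i sp) _.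
    by rewrite mulrDl mul1r mulfV ?gt_eqF // lerDl invr_ge0 ltW.
  under eq_bigr do rewrite !mxE.
  rewrite -mulr_sumr sumrB sumr_const card_ord sp.2 -mulr_natr.
  by field; rewrite gt_eqF.
have u_conv : u = t *: p + (1 - t) *: q.
  by apply/rowP => i; rewrite !mxE /t; field; rewrite gt_eqF //= ?addr_gt0.
have := cvx p q t sp sq; rewrite ltW //= t_le1 -u_conv => /(_ isT) fu_le.
have t1_ge0 : 0 <= 1 - t by lra.
have := ler_wpM2l t1_ge0 (convex_on_simplex_le_vertices cvx sq).
rewrite ler_pdivrMr //; lra.
Qed.

End SimplexConvexity.

Section Bellman.
Variables (R : realType) (S : finType) (n : nat).
Variables (P : S -> 'I_n -> S -> R) (c : S -> 'I_n -> R) (h : S -> 'rV[R]_n -> R).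
Variable gamma : R.
Hypotheses (P_ge0 : forall s a s', 0 <= P s a s') (P_sum1 : forall s a, \sum_s' P s a s' = 1).
Hypotheses (gamma_ge0 : 0 <= gamma) (gamma_lt1 : gamma < 1).
Implicit Types (pi : S -> 'rV[R]_n) (s : S).

Local Notation V := (V P c h gamma).
Local Notation Vterm := (Vterm P c h).

Lemma sum_dirac (f : S -> R) s : \sum_s' Defs.dirac R s s' * f s' = f s.
Proof.
rewrite (bigD1 s) //= /Defs.dirac eqxx mul1r big1 ?addr0 // => s' /negbTE ->.
by rewrite mul0r.
Qed.

Lemma Ppi_ge0 pi : is_policy pi -> forall s s', 0 <= Ppi P pi s s'.
Proof. by move=> pol s s'; apply: sumr_ge0 => a _; rewrite mulr_ge0 ?(pol s).1. Qed.

Lemma Ppi_sum1 pi : is_policy pi -> forall s, \sum_s' Ppi P pi s s' = 1.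
Proof.
move=> pol s; rewrite /Ppi exchange_big /= -(pol s).2.
by apply: eq_bigr => a _; rewrite -mulr_sumr P_sum1 mulr1.
Qed.

Lemma sdist_mix pi d t s' :
  sdist P pi d t s' = \sum_s d s * sdist P pi (Defs.dirac R s) t s'.
Proof.
elim: t s' => [|t IH] s' /=.
  rewrite (bigD1 s') //= /Defs.dirac eqxx mulr1 big1 ?addr0 // => s.
  by rewrite eq_sym => /negbTE ->; rewrite mulr0.
under eq_bigr => s1 _ do rewrite IH mulr_suml.
rewrite exchange_big; apply: eq_bigr => s _.
by rewrite mulr_sumr; apply: eq_bigr => s1 _; rewrite mulrA.
Qed.

Lemma sdistS pi d t s' :
  sdist P pi d t.+1 s' = sdist P pi (fun s1 => \sum_s d s * Ppi P pi s s1) t s'.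
Proof.
elim: t s' => [//|t IH] s'.
by rewrite [LHS]/= (eq_bigr _ (fun s1 _ => congr1 (fun x => x * _) (IH s1))).
Qed.

Lemma Vterm0 pi s : Vterm pi s 0 = rpi c h pi s.
Proof. by rewrite /Vterm /= sum_dirac. Qed.

Lemma VtermS pi s t : Vterm pi s t.+1 = \sum_s1 Ppi P pi s s1 * Vterm pi s1 t.
Proof.
rewrite /Vterm; under eq_bigr do rewrite sdistS sdist_mix mulr_suml.
rewrite exchange_big; apply: eq_bigr => s1 _.
by rewrite sum_dirac mulr_sumr; apply: eq_bigr => s' _; rewrite mulrA.
Qed.

Lemma QtermS pi s a t : Qterm P c h pi s a t.+1 = \sum_s1 P s a s1 * Vterm pi s1 t.
Proof.
rewrite /Qterm /Vterm; under eq_bigr do rewrite sdist_mix mulr_suml.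
rewrite exchange_big; apply: eq_bigr => s1 _.
by rewrite mulr_sumr; apply: eq_bigr => s' _; rewrite mulrA.
Qed.

Lemma Vterm_bounded pi : is_policy pi ->
  forall t s, `|Vterm pi s t| <= \sum_s' `|rpi c h pi s'|.
Proof.
move=> pol; elim=> [|t IH] s.
  by rewrite Vterm0 (bigD1 s) //= lerDl sumr_ge0.
rewrite VtermS; apply: le_trans (ler_norm_sum _ _ _) _.
rewrite -[leRHS]mul1r -(Ppi_sum1 pol s) mulr_suml; apply: ler_sum => s1 _.
by rewrite normrM ger0_norm ?Ppi_ge0 // ler_wpM2l ?Ppi_ge0.
Qed.

Lemma is_cvg_Vseries pi s : is_policy pi ->
  cvgn (series (fun t => gamma ^+ t * Vterm pi s t)).
Proof.
move=> pol; apply: normed_cvg.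
apply: (@series_le_cvg _ _ (geometric (\sum_s' `|rpi c h pi s'|) gamma)) => [k|k|k|].
- exact: normr_ge0.
- by rewrite /geometric /= mulr_ge0 ?exprn_ge0 ?sumr_ge0.
- rewrite /geometric /= normrM ger0_norm ?exprn_ge0 // mulrC.
  by rewrite ler_wpM2r ?exprn_ge0 ?Vterm_bounded.
- by apply: is_cvg_geometric_series; rewrite ger0_norm.
Qed.

Lemma limn_discounted_step (u : nat -> R) (k : S -> R) (w : S -> nat -> R) :
  (forall s1, cvgn (series (fun t => gamma ^+ t * w s1 t))) ->
  (forall t, u t.+1 = \sum_s1 k s1 * w s1 t) ->
  limn (series (fun t => gamma ^+ t * u t)) =
  u 0%N + gamma * \sum_s1 k s1 * limn (series (fun t => gamma ^+ t * w s1 t)).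
Proof.
move=> w_cvg uS.
have seriesS N : series (fun t => gamma ^+ t * u t) N.+1 =
    u 0%N + gamma * \sum_s1 k s1 * series (fun t => gamma ^+ t * w s1 t) N.
  rewrite /series /= big_nat_recl // expr0 mul1r; congr (_ + _).
  under eq_bigr do rewrite exprS -mulrA uS mulr_sumr.
  rewrite -mulr_sumr exchange_big /=; congr (_ * _); apply: eq_bigr => s1 _.
  by rewrite mulr_sumr; apply: eq_bigr => t _; rewrite mulrCA.
apply: cvg_lim => //; rewrite -cvg_shiftS /=.
under eq_cvg do rewrite seriesS.
apply: cvgD; first exact: cvg_cst.
apply: cvgMl_tmp; apply: cvg_big => [|s1 _]; first exact: add_continuous.
exact: cvgMl_tmp (w_cvg s1).
Qed.

Lemma V_bellman pi s : is_policy pi ->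
  V pi s = rpi c h pi s + gamma * \sum_s1 Ppi P pi s s1 * V pi s1.
Proof.
move=> pol; rewrite /Defs.V (@limn_discounted_step (Vterm pi s) (Ppi P pi s) (Vterm pi)).
- by rewrite Vterm0.
- by move=> s1; exact: is_cvg_Vseries.
- by move=> t; rewrite VtermS.
Qed.

Lemma Q_bellman pi s a : is_policy pi ->
  Q P c h gamma pi s a = c s a + h s (pi s) + gamma * \sum_s1 P s a s1 * V pi s1.
Proof.
move=> pol; rewrite /Q (@limn_discounted_step (Qterm P c h pi s a) (P s a) (Vterm pi)).
- by [].
- by move=> s1; exact: is_cvg_Vseries.
- by move=> t; rewrite QtermS.
Qed.

Lemma dot_Qrow pi s p : is_policy pi -> simplex p ->
  dot (Qrow P c h gamma pi s) p = \sum_a p 0 a * c s a + h s (pi s)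
    + gamma * \sum_s1 (\sum_a p 0 a * P s a s1) * V pi s1.
Proof.
move=> pol [_ p_sum1]; rewrite /dot.
under eq_bigr do rewrite /Qrow mxE Q_bellman // !mulrDl.
rewrite !big_split /=; congr (_ + _ + _).
- by apply: eq_bigr => a _; rewrite mulrC.
- by rewrite -mulr_sumr p_sum1 mulr1.
- under eq_bigr do rewrite -mulrA.
  rewrite -mulr_sumr; congr (_ * _).
  under eq_bigr do rewrite mulr_suml.
  rewrite exchange_big; apply: eq_bigr => s1 _; rewrite mulr_suml.
  by apply: eq_bigr => a _; rewrite mulrC mulrA.
Qed.

Lemma adv_policy pi pi' s : is_policy pi -> is_policy pi' ->
  adv P c h gamma pi s (pi' s) =
  V pi' s - V pi s - gamma * \sum_s1 Ppi P pi' s s1 * (V pi' s1 - V pi s1).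
Proof.
move=> pol pol'.
have -> : \sum_s1 Ppi P pi' s s1 * (V pi' s1 - V pi s1)
        = \sum_s1 Ppi P pi' s s1 * V pi' s1 - \sum_s1 Ppi P pi' s s1 * V pi s1.
  by rewrite -sumrB; apply: eq_bigr => s1 _; rewrite mulrBr.
by rewrite /adv dot_Qrow ?(V_bellman s pol') // /rpi /Ppi; ring.
Qed.

Lemma adv_policy_opp pi pi' s : is_policy pi -> is_policy pi' ->
  - adv P c h gamma pi s (pi' s) =
  V pi s - V pi' s - gamma * \sum_s1 Ppi P pi' s s1 * (V pi s1 - V pi' s1).
Proof.
move=> pol pol'; rewrite adv_policy //.
have -> : \sum_s1 Ppi P pi' s s1 * (V pi' s1 - V pi s1)
        = - \sum_s1 Ppi P pi' s s1 * (V pi s1 - V pi' s1).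
  by rewrite -sumrN; apply: eq_bigr => s1 _; rewrite -mulrN opprB.
lra.
Qed.

Lemma adv_self pi s : is_policy pi -> adv P c h gamma pi s (pi s) = 0.
Proof.
move=> pol; rewrite adv_policy // subrr big1 ?mulr0 ?subr0 // => s1 _.
by rewrite subrr mulr0.
Qed.

Lemma V_sub_le_adv pi pi' : is_policy pi -> is_policy pi' ->
  (forall s, adv P c h gamma pi s (pi' s) <= 0) ->
  forall s, V pi' s - V pi s <= adv P c h gamma pi s (pi' s).
Proof.
move=> pol pol' adv_le0.
have diff_le0 s : V pi' s - V pi s <= 0.
  have := discounted_max_principle (Ppi_ge0 pol') (Ppi_sum1 pol') gamma_ge0 gamma_lt1
    (y := fun s => V pi' s - V pi s) (C := 0).
  rewrite mul0r; apply=> s1 /=; rewrite -adv_policy //; exact: adv_le0.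
move=> s; rewrite adv_policy //.
have : gamma * \sum_s1 Ppi P pi' s s1 * (V pi' s1 - V pi s1) <= 0.
  rewrite mulr_ge0_le0 // sumr_le0 // => s1 _.
  by rewrite mulr_ge0_le0 ?Ppi_ge0 ?diff_le0.
lra.
Qed.

(* [sup] of a set that is not bounded above is a junk value; the lower bound of the
   convex [h s] on the simplex is what makes [adv_gap] an upper bound. *)
Lemma adv_le_adv_gap pi s p : convex_on_simplex (h s) -> simplex p ->
  - adv P c h gamma pi s p <= adv_gap P c h gamma pi s.
Proof.
move=> cvx sp; apply: ub_le_sup; last by exists p.
have [L hL] := convex_on_simplex_lbounded cvx.
exists (\sum_a `|Qrow P c h gamma pi s 0 a| + V pi s - L + h s (pi s)) => _ [q sq <-].
have := hL q sq; have := dot_simplex_ge (Qrow P c h gamma pi s) sq.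
rewrite /adv; lra.
Qed.

Lemma V_sub_le_adv_gap pi pi' : is_policy pi -> is_policy pi' ->
  (forall s, convex_on_simplex (h s)) ->
  forall s, V pi s - V pi' s
            <= (1 - gamma)^-1 * \big[Num.max/0]_s adv_gap P c h gamma pi s.
Proof.
move=> pol pol' h_cvx s; rewrite mulrC.
apply: (discounted_max_principle (Ppi_ge0 pol') (Ppi_sum1 pol') gamma_ge0 gamma_lt1
  (y := fun s => V pi s - V pi' s)) => s1 /=.
rewrite -adv_policy_opp //; apply: le_trans (adv_le_adv_gap _ (h_cvx s1) (pol' s1)) _.
exact: le_bigmax.
Qed.

End Bellman.

Section PolicyMirrorDescent.
Variables (R : realType) (S : finType) (n : nat).
Variables (P : S -> 'I_n -> S -> R) (c : S -> 'I_n -> R) (h : S -> 'rV[R]_n -> R).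
Variables (gamma : R) (omega : 'rV[R]_n -> R).
Hypotheses (P_ge0 : forall s a s', 0 <= P s a s') (P_sum1 : forall s a, \sum_s' P s a s' = 1).
Hypotheses (gamma_ge0 : 0 <= gamma) (gamma_lt1 : gamma < 1).
Hypothesis omega_diff : forall p, simplex p -> differentiable omega p.
Hypothesis omega_convex : convex_on_simplex omega.
Hypothesis h_convex : forall s, convex_on_simplex (h s).
Variables (eta : nat -> R) (pis : nat -> S -> 'rV[R]_n) (pistar : S -> 'rV[R]_n).
Hypotheses (eta_gt0 : forall t, 0 < eta t) (pis0 : is_policy (pis 0)).
Hypothesis pmd : is_PMD P c h gamma omega eta pis.
Hypothesis pistar_optimal : is_optimal P c h gamma pistar.

Local Notation V := (V P c h gamma).
Local Notation adv := (adv P c h gamma).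

Let pistar_policy : is_policy pistar := pistar_optimal.1.

Lemma PMD_policy t : is_policy (pis t).
Proof. by case: t => [//|t] s; case: (pmd t s). Qed.

Lemma PMD_three_point t s p : simplex p ->
  eta t * adv (pis t) s (pis t.+1 s) + bregman omega (pis t.+1 s) (pis t s)
    + bregman omega p (pis t.+1 s)
  <= eta t * adv (pis t) s p + bregman omega p (pis t s).
Proof.
move=> sp; have [snext opt] := pmd t s.
have := bregman_three_point (omega_diff snext) (convex_on_simplexZ (ltW (eta_gt0 t))
  (convex_on_simplex_dotD (Qrow P c h gamma (pis t) s) (h_convex s))) snext sp opt.
rewrite /adv; lra.
Qed.

Lemma PMD_adv_le0 t s : adv (pis t) s (pis t.+1 s) <= 0.
Proof.
have sp := PMD_policy t s; have snext := PMD_policy t.+1 s.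
have := PMD_three_point t s sp.
rewrite (adv_self c h P_ge0 P_sum1 gamma_ge0 gamma_lt1 s (PMD_policy t)) bregman_self mulr0.
have := bregman_ge0 (omega_diff sp) omega_convex snext sp.
have := bregman_ge0 (omega_diff snext) omega_convex sp snext.
rewrite -(pmulr_rle0 _ (eta_gt0 t)); lra.
Qed.

Lemma PMD_V_nonincreasing t s : V (pis t.+1) s <= V (pis t) s.
Proof.
have := V_sub_le_adv P_ge0 P_sum1 gamma_ge0 gamma_lt1 (PMD_policy t) (PMD_policy t.+1)
  (PMD_adv_le0 t) s.
have := PMD_adv_le0 t s; lra.
Qed.

Lemma PMD_gap_step t s :
  eta t * (V (pis t) s - V pistar s
           - gamma * \sum_s' Ppi P pistar s s' * (V (pis t) s' - V pistar s'))
  <= eta t * ((V (pis t) s - V pistar s) - (V (pis t.+1) s - V pistar s))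
     + bregman omega (pistar s) (pis t s) - bregman omega (pistar s) (pis t.+1 s).
Proof.
have sp := PMD_policy t s; have snext := PMD_policy t.+1 s.
have := PMD_three_point t s (pistar_policy s).
rewrite -[adv _ _ (pistar s)]opprK.
rewrite (adv_policy_opp c h P_ge0 P_sum1 gamma_ge0 gamma_lt1 s (PMD_policy t) pistar_policy).
have := ler_wpM2l (ltW (eta_gt0 t)) (V_sub_le_adv P_ge0 P_sum1 gamma_ge0 gamma_lt1
  (PMD_policy t) (PMD_policy t.+1) (PMD_adv_le0 t) s).
have := bregman_ge0 (omega_diff sp) omega_convex snext sp.
lra.
Qed.

Lemma PMD_restarted_gap_le (Delta0 Dbar0 : R) (N : nat) :
  0 < Delta0 -> 0 < Dbar0 -> (0 < N)%N -> 4 <= (1 - gamma) * N%:R ->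
  (forall t, eta t = 4 ^+ (t %/ N) * Dbar0 / Delta0) ->
  (forall s, V (pis 0) s - V pistar s <= Delta0) ->
  (forall s, bregman omega (pistar s) (pis 0 s) <= Dbar0) ->
  forall t s, V (pis t) s - V pistar s <= Delta0 / 2 ^+ (t %/ N).
Proof.
move=> Delta0_gt0 Dbar0_gt0 N_gt0 N_large etaE gap0_le breg0_le.
have gap_ge0 t s : 0 <= V (pis t) s - V pistar s.
  by rewrite subr_ge0; apply: pistar_optimal.2; exact: PMD_policy.
have breg_ge0 t s : 0 <= bregman omega (pistar s) (pis t s).
  have sp := PMD_policy t s.
  exact: bregman_ge0 (omega_diff sp) omega_convex (pistar_policy s) sp.
have gap_succ_le t s : V (pis t.+1) s - V pistar s <= V (pis t) s - V pistar s.
  by rewrite lerD2r PMD_V_nonincreasing.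
apply: (gap_le (Ppi_ge0 P_ge0 pistar_policy) (Ppi_sum1 P_sum1 pistar_policy)
  gamma_ge0 gamma_lt1 Delta0_gt0 Dbar0_gt0 N_gt0 N_large
  gap_ge0 breg_ge0 gap0_le breg0_le gap_succ_le) => t s.
by rewrite -etaE PMD_gap_step.
Qed.

End PolicyMirrorDescent.

Lemma ceil_epoch_length (R : realType) (g : R) : 0 <= g < 1 ->
  exists N : nat, [/\ (0 < N)%N, Num.ceil (4 / (1 - g)) = N%:Z & 4 <= (1 - g) * N%:R].
Proof.
move=> /andP[g_ge0 g_lt1]; have g1_gt0 : 0 < 1 - g by rewrite subr_gt0.
have ceil_ge4 := ceil_ge (4 / (1 - g)).
have ceil_gt0 : 0 < Num.ceil (4 / (1 - g)).
  by rewrite -(ltr0z R); apply: lt_le_trans ceil_ge4; rewrite divr_gt0.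
have ceilE : Num.ceil (4 / (1 - g)) = `|Num.ceil (4 / (1 - g))|%N by rewrite gez0_abs ?ltW.
exists `|Num.ceil (4 / (1 - g))|%N; split => //; first by rewrite -ltz_nat -ceilE.
by move: ceil_ge4; rewrite [X in _ <= X%:~R]ceilE ler_pdivrMr // mulrC.
Qed.

Lemma floor_div_natr (R : realType) (t N : nat) : (0 < N)%N ->
  Num.floor (t%:R / N%:R : R) = (t %/ N)%:Z.
Proof.
move=> N_gt0; apply: floor_def; rewrite -PoszD addn1.
have N_gt0' : 0 < N%:R :> R by rewrite ltr0n.
rewrite ler_pdivlMr // ltr_pdivrMr // -!natrM ler_nat ltr_nat.
by rewrite leq_divM ltn_ceil.
Qed.

Theorem theorem3p4 (R : realType) (S : finType) (n : nat)
  (P : S -> 'I_n -> S -> R) (c : S -> 'I_n -> R) (gamma : R)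
  (omega : 'rV[R]_n -> R) (h : S -> 'rV[R]_n -> R) (mu_h : R)
  (pistar : S -> 'rV[R]_n) (pis : nat -> S -> 'rV[R]_n) (Dbar0 : R) :
  (* MDP: transition probabilities, discount *)
  (forall s a s', 0 <= P s a s') ->
  (forall s a, \sum_(s' : S) P s a s' = 1) ->
  0 <= gamma < 1 ->
  (* distance-generating function: differentiable, convex on the simplex *)
  (forall p, simplex p -> differentiable omega p) ->
  convex_on_simplex omega ->
  (* regularizer: closed convex, mu_h-strongly convex w.r.t. the Bregman distance *)
  0 <= mu_h ->
  (forall s, convex_on_simplex (h s)) ->
  (forall s, lsc_on_simplex (h s)) ->
  (forall s p p' g, simplex p -> simplex p' -> is_subgrad (h s) p' g ->
     h s p - h s p' - dot g (p - p') >= mu_h * bregman omega p p') ->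
  (* optimal policy *)
  is_optimal P c h gamma pistar ->
  (* initial policy, Delta_0, Dbar_0 *)
  is_policy (pis 0%N) ->
  let Delta0 := (1 - gamma)^-1 * \big[Num.max/0]_(s : S) adv_gap P c h gamma (pis 0%N) s in
  0 < Delta0 ->
  0 < Dbar0 ->
  (forall s, bregman omega (pistar s) (pis 0%N s) <= Dbar0) ->
  let N : int := Num.ceil (4 / (1 - gamma) : R) in
  let k (t : nat) : int := Num.floor ((t%:R : R) / N%:~R) in
  (* PMD run with eta_t = 4^{floor(t/N)} Dbar0 / Delta0 *)
  is_PMD P c h gamma omega (fun t => (4 : R) ^ k t * Dbar0 / Delta0) pis ->
  forall t s, V P c h gamma (pis t) s - V P c h gamma pistar s <= (2 : R) ^ (- k t) * Delta0.
Proof.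
move=> P_ge0 P_sum1 gamma01 omega_diff omega_cvx _ h_cvx _ _ pistar_opt pis0
  Delta0 Delta0_gt0 Dbar0_gt0 breg0_le N k pmd t s.
have /andP[gamma_ge0 gamma_lt1] := gamma01.
have [M [M_gt0 NE M_large]] := ceil_epoch_length gamma01.
have kE t' : k t' = (t' %/ M)%:Z by rewrite /k /N NE floor_div_natr.
pose eta t' : R := 4 ^+ (t' %/ M) * Dbar0 / Delta0.
have eta_gt0 t' : 0 < eta t' by rewrite /eta divr_gt0 // mulr_gt0 // exprn_gt0.
have pmd_eta : is_PMD P c h gamma omega eta pis.
  by move=> t' s'; have := pmd t' s'; rewrite /= kE.
have gap0_le s' : V P c h gamma (pis 0%N) s' - V P c h gamma pistar s' <= Delta0.
  by apply: V_sub_le_adv_gap => //; case: pistar_opt.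
rewrite kE -exprnN mulrC.
exact: (PMD_restarted_gap_le P_ge0 P_sum1 gamma_ge0 gamma_lt1 omega_diff omega_cvx h_cvx
  eta_gt0 pis0 pmd_eta pistar_opt Delta0_gt0 Dbar0_gt0 M_gt0 M_large (fun=> erefl)
  gap0_le breg0_le).
Qed.
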